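(* For every $\mathbb T\in\mathrm{Tab}_\lambda$ (identified with $1\otimes\mathbb T\in\mathcal M_\lambda$) and every $1\le i\le N$, $\mathbb T\,\Xi_i=s^{\mathrm{CT}_{\mathbb T}[i]}\,\mathbb T$.
   Context: $N\ge2$, $q,s$ indeterminates, $K=\mathbb C(q,s)$. Operators act on the right, composed left to right. $\mathcal H_N(s)$ is generated by $T_1,\dots,T_{N-1}$ with $(T_i+1)(T_i-s)=0$ and the braid relations. $\lambda$ is a partition of $N$ (French convention, rows numbered bottom to top); $\mathrm{Tab}_\lambda$ = reverse standard tableaux (bijective fillings by $1,\dots,N$ strictly decreasing left to right in rows and bottom to top in columns); $\mathrm{CT}_{\mathbb T}[i]$ = column minus row of the cell containing $i$; $\mathbb T^{(i,j)}$ exchanges $i,j$. $V_\lambda$ has basis $\mathrm{Tab}_\lambda$ with right action $\mathbb TT_i=s\mathbb T$ if $i,i+1$ share a row, $-\mathbb T$ if they share a column, and if $i$ is in a higher row than $i+1$, with $m=\mathrm{CT}_{\mathbb T}[i+1]-\mathrm{CT}_{\mathbb T}[i]>0$, $\mathbb TT_i=\frac{s-1}{1-s^m}\mathbb T+\frac{s(1-s^{m+1})(1-s^{m-1})}{(1-s^m)^2}\mathbb T^{(i,i+1)}$; the remaining case is determined by this formula for $\mathbb T^{(i,i+1)}$ and the quadratic relation. $\mathcal M_\lambda=K[x_1,\dots,x_N]\otimes V_\lambda$; with $p^{s_i}$ = $p$ with $x_i,x_{i+1}$ exchanged: $(p\otimes u)\mathbf T_i=(1-s)\frac{x_{i+1}(p-p^{s_i})}{x_i-x_{i+1}}\otimes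 u+p^{s_i}\otimes uT_i$, $(p\otimes u)\mathbf w=p(qx_N,x_1,\dots,x_{N-1})\otimes uT_1\cdots T_{N-1}$, $\mathbf T_i^{-1}=s^{-1}(\mathbf T_i+1-s)$. Cherednik operators: $\Xi_i=s^{i-N}\mathbf T_{i-1}^{-1}\cdots\mathbf T_1^{-1}\mathbf w\mathbf T_{N-1}\cdots\mathbf T_i$. *)

From HB Require Import structures.
From mathcomp Require Import all_boot all_order all_algebra all_fingroup.
From mathcomp Require Import Rstruct complex.
From mathcomp Require Import mpoly.
From Stdlib Require Import ClassicalEpsilon.

Set Implicit Arguments.
Unset Strict Implicit.
Unset Printing Implicit Defensive.

Import Order.TTheory GRing.Theory Num.Theory.
Local Open Scope ring_scope.

(* K = fraction field of C[q][s]  (inner variable q, outer variable s) *)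
Definition CC : fieldType := complex Rdefinitions.R.
Definition K : fieldType := {fraction {poly {poly CC}}}.
Definition s : K := tofrac ('X : {poly {poly CC}}).
Definition q : K := tofrac ((('X : {poly CC}))%:P : {poly {poly CC}}).

(* Cells are pairs (row, column), 0-based, rows counted bottom to top  *)
(* (French convention); row r of the shape la has length nth 0 la r.   *)
Definition is_partition (N : nat) (la : seq nat) : bool :=
  [&& sorted geq la, all (fun x => 0 < x)%N la & sumn la == N].

Definition in_shape (la : seq nat) (c : nat * nat) : bool :=
  (c.1 < size la)%N && (c.2 < nth 0 la c.1)%N.

(* A filling: the entry k+1 (k : 'I_N) sits in the cell T k. *)
Notation tabT N := {ffun 'I_N -> 'I_N * 'I_N}.

Definition cellnat N (c : 'I_N * 'I_N) : nat * nat := (val c.1, val c.2).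

Definition is_rst N (la : seq nat) (T : tabT N) : bool :=
  [&& injectiveb T,
      [forall k, in_shape la (cellnat (T k))],
      [forall c : 'I_N * 'I_N, in_shape la (cellnat c) ==> (c \in codom T)],
      [forall k, forall l,
         (((T k).1 == (T l).1) && ((T k).2 < (T l).2)%N) ==> (l < k)%N] &
      [forall k, forall l,
         (((T k).2 == (T l).2) && ((T k).1 < (T l).1)%N) ==> (l < k)%N]].

(* cell (row, column) of the entry i (1 <= i <= N) *)
Definition cellT N (T : tabT N) (i : nat) : nat * nat :=
  if (insub i.-1 : option 'I_N) is Some k then cellnat (T k) else (0, 0)%N.
Definition rowT N (T : tabT N) i := (cellT T i).1.
Definition colT N (T : tabT N) i := (cellT T i).2.
Definition CT N (T : tabT N) (i : nat) : int := (colT T i)%:Z - (rowT T i)%:Z.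

Definition tswap N (T : tabT N) (i j : nat) : tabT N :=
  match (insub i.-1 : option 'I_N), (insub j.-1 : option 'I_N) with
  | Some a, Some b => [ffun k => T (tperm a b k)]
  | _, _ => T
  end.

(* The module V_la (vectors = K-valued functions on fillings; the      *)
(* basis vector of a tableau T is bv T) and the right action of T_i.   *)
Notation Vsp N := {ffun tabT N -> K}.

Definition bv N (T : tabT N) : Vsp N := [ffun T' => (T' == T)%:R].

Definition vscale N (c : K) (v : Vsp N) : Vsp N := [ffun T => c * v T].

Definition coefA (m : int) : K := (s - 1) / (1 - s ^ m).
Definition coefB (m : int) : K :=
  s * (1 - s ^ (m + 1)) * (1 - s ^ (m - 1)) / (1 - s ^ m) ^+ 2.

Definition actT N (T : tabT N) (i : nat) : Vsp N :=
  if rowT T i == rowT T i.+1 then vscale s (bv T)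
  else if colT T i == colT T i.+1 then - bv T
  else if (rowT T i.+1 < rowT T i)%N then
    (* i in a higher row than i+1 : m = CT[i+1] - CT[i] > 0 *)
    let m := CT T i.+1 - CT T i in
    vscale (coefA m) (bv T) + vscale (coefB m) (bv (tswap T i i.+1))
  else
    (* remaining case: with T' = T^{(i,i+1)} (for which the previous
       formula gives T' T_i = a T' + b T), the quadratic relation
       T_i^2 = (s-1) T_i + s forces T T_i = (s-1-a) T + ((s-1-a)a+s)/b T'. *)
    let T' := tswap T i i.+1 in
    let m' := CT T' i.+1 - CT T' i in
    vscale (s - 1 - coefA m') (bv T)
      + vscale (((s - 1 - coefA m') * coefA m' + s) / coefB m') (bv T').

Definition actV N (v : Vsp N) (i : nat) : Vsp N :=
  \sum_(T : tabT N) vscale (v T) (actT T i).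

(* M_la = K[x_1..x_N] (x) V_la : functions from fillings to            *)
(* polynomials; p (x) u is tens p u.                                   *)
Notation Msp N := {ffun tabT N -> {mpoly K[N]}}.

Definition tens N (p : {mpoly K[N]}) (u : Vsp N) : Msp N := [ffun T => u T *: p].

(* the variable x_{k+1} (0-based index k) *)
Definition mkX N (k : nat) : {mpoly K[N]} :=
  if (insub k : option 'I_N) is Some o then 'X_o else 0.

(* p^{s_i} : exchange x_i and x_{i+1} *)
Definition swapn (i j : nat) : nat :=
  if j == i.-1 then i else if j == i then i.-1 else j.
Definition psw N (i : nat) (p : {mpoly K[N]}) : {mpoly K[N]} :=
  p \mPo [tuple mkX N (swapn i j) | j < N].

(* p(q x_N, x_1, ..., x_{N-1}) *)
Definition pshift N (p : {mpoly K[N]}) : {mpoly K[N]} :=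
  p \mPo [tuple (if val j == 0%N then q *: mkX N N.-1 else mkX N (val j).-1) | j < N].

Definition divq N (a b : {mpoly K[N]}) : {mpoly K[N]} :=
  epsilon (inhabits 0) (fun r => r * b = a).

Definition opT N (i : nat) (F : Msp N) : Msp N :=
  \sum_(T : tabT N)
    (tens ((1 - s) *: divq (mkX N i * (F T - psw i (F T)))
                           (mkX N i.-1 - mkX N i)) (bv T)
     + tens (psw i (F T)) (actT T i)).

Definition opTinv N (i : nat) (F : Msp N) : Msp N :=
  s^-1 *: (opT i F + (1 - s) *: F).

Definition opw N (F : Msp N) : Msp N :=
  \sum_(T : tabT N)
    tens (pshift (F T)) (foldl (@actV N) (bv T) (iota 1 N.-1)).

(* Cherednik operator Xi_i = s^{i-N} T_{i-1}^{-1} ... T_1^{-1} w T_{N-1} ... T_i,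
   operators acting on the right, composed left to right. *)
Definition Xi N (i : nat) (F : Msp N) : Msp N :=
  s ^ (i%:Z - N%:Z) *:
    foldl (fun G j => opT j G)
      (opw (foldl (fun G j => opTinv j G) F (rev (iota 1 i.-1))))
      (rev (iota i (N - i))).

(* On constants 1 (x) v the divided-difference part of every T_i vanishes and w acts
   as T_1 ... T_(N-1), so after the T_j^-1 cancel the first factors of w, Xi_i becomes
   s^(i-N) times W_i : v |-> v T_i ... T_(N-1) T_(N-1) ... T_i.  The cancellation uses
   the quadratic relation, which holds on the span of the reverse standard tableaux.
   Since W_i = T_i W_(i+1) T_i, descending induction on i shows that W_i is diagonal
   with eigenvalue s^(N-i+CT[i]).  The entry N sits in the corner cell, of content 0.
   If i, i+1 share a row (column), their contents differ by 1 (-1) and T_i acts by s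
   (-1).  Otherwise T_i acts on span {T, T^(i,i+1)} by a 2x2 block with eigenvalues s
   and -1, whose diagonal entries intertwine the two eigenvalues of W_(i+1); this is
   the relation T_i X_(i+1) T_i = s X_i between Jucys-Murphy elements. *)

From Pilot Require Import Defs.
From mathcomp Require Import all_boot all_algebra all_fingroup.
From mathcomp Require Import mpoly.
From mathcomp Require Import ring zify.
From Stdlib Require Import ClassicalEpsilon.

Set Implicit Arguments.
Unset Strict Implicit.
Unset Printing Implicit Defensive.

Import GRing.Theory.
Local Open Scope ring_scope.

(** * Reverse standard tableaux *)

Lemma partition_nth_le N la r1 r2 : is_partition N la ->
  (r1 <= r2 < size la)%N -> (nth 0 la r2 <= nth 0 la r1)%N.
Proof.
case/and3P=> sorted_la _ _ /andP[le12 lt2].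
have /= := sorted_leq_nth (fun x y z h1 h2 => leq_trans h2 h1) leqnn 0%N sorted_la.
by apply; rewrite ?inE //; apply: leq_ltn_trans lt2.
Qed.

Lemma tperm_succ_lt n (a b k l : 'I_n) : (b : nat) = a.+1 ->
  (tperm a b l < tperm a b k)%N -> (l < k)%N \/ (k = a /\ l = b).
Proof.
have val_neq (x y : 'I_n) : x <> y -> (x : nat) <> y by move=> xy /val_inj.
move=> ab; case: tpermP => [->|->|/val_neq la /val_neq lb];
  case: tpermP => [->|->|/val_neq ka /val_neq kb] //= lt; try by right.
all: by left; lia.
Qed.

Section Tableaux.
Variables (N : nat) (la : seq nat).

Lemma cellT_ord (T : tabT N) (k : 'I_N) : cellT T k.+1 = cellnat (T k).
Proof.
rewrite /cellT /= (insubT (fun x => x < N)%N (ltn_ord k)) /=.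
by do 2 f_equal; apply: val_inj.
Qed.

Lemma entry_ord k : (0 < k <= N)%N -> exists a : 'I_N, k = a.+1.
Proof. by case: k => // k hk; exists (Ordinal hk). Qed.

Lemma cellT_lt (T : tabT N) k : (0 < k <= N)%N ->
  (rowT T k < N)%N /\ (colT T k < N)%N.
Proof. by case/entry_ord=> a ->; rewrite /rowT /colT cellT_ord; split; apply: ltn_ord. Qed.

Lemma tswap_tperm (T : tabT N) i : (0 < i < N)%N -> exists a b : 'I_N,
  [/\ i = a.+1, i = b & tswap T i i.+1 = [ffun c => T (tperm a b c)]].
Proof.
case/andP=> i_gt0 iN; have i1N : (i.-1 < N)%N by lia.
exists (Ordinal i1N), (Ordinal iN); split => //=; first lia.
rewrite /tswap (insubT (fun x => x < N)%N i1N) /= (insubT (fun x => x < N)%N iN) /=.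
by congr [ffun c => T (tperm _ _ c)]; apply: val_inj.
Qed.

Lemma cellT_tswap (T : tabT N) i k : (0 < i < N)%N -> (0 < k <= N)%N ->
  cellT (tswap T i i.+1) k = cellT T (if k == i then i.+1 else if k == i.+1 then i else k).
Proof.
move=> /(tswap_tperm T) [a [b [ia ib ->]]] /entry_ord [c ->].
rewrite cellT_ord ffunE; case: tpermP => [->|->|ca cb].
- by rewrite -ia eqxx ib -cellT_ord.
- rewrite -ib eqxx (_ : (i.+1 == i) = false); last by apply/eqP; lia.
  by rewrite ia -cellT_ord.
have /negPf-> : c.+1 != i by rewrite ia eqSS val_eqE; apply/eqP.
have /negPf-> : c.+1 != i.+1 by rewrite ib eqSS val_eqE; apply/eqP.
by rewrite cellT_ord.
Qed.

Lemma tswap_rowcol (T : tabT N) i : (0 < i < N)%N ->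
  let T' := tswap T i i.+1 in
  [/\ rowT T' i = rowT T i.+1, rowT T' i.+1 = rowT T i,
      colT T' i = colT T i.+1 & colT T' i.+1 = colT T i].
Proof.
move=> i_range; have [ei ei1] : (0 < i <= N)%N /\ (0 < i.+1 <= N)%N by lia.
have i1_neq : (i.+1 == i) = false by apply/eqP; lia.
by rewrite /rowT /colT !cellT_tswap // eqxx i1_neq eqxx.
Qed.

Variables (T : tabT N).
Hypothesis T_rst : is_rst la T.

Lemma rst_in_shape k : (0 < k <= N)%N ->
  (rowT T k < size la)%N /\ (colT T k < nth 0 la (rowT T k))%N.
Proof.
case/entry_ord=> a ->; apply/andP; rewrite /rowT /colT cellT_ord.
by case/and5P: T_rst => _ /forallP/(_ a).
Qed.

Lemma rst_entry_at r c : (r < N)%N -> (c < N)%N -> in_shape la (r, c) ->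
  exists k, [/\ (0 < k <= N)%N, rowT T k = r & colT T k = c].
Proof.
move=> hr hc in_rc.
case/and5P: T_rst => _ _ /forallP/(_ (Ordinal hr, Ordinal hc)) /implyP onto _ _.
have [a ca] := codomP (onto in_rc).
by exists a.+1; rewrite /rowT /colT cellT_ord -ca ltn_ord.
Qed.

Lemma rst_entry_inj k l : (0 < k <= N)%N -> (0 < l <= N)%N ->
  rowT T k = rowT T l -> colT T k = colT T l -> k = l.
Proof.
case/entry_ord=> a ->; case/entry_ord=> b ->; rewrite /rowT /colT !cellT_ord /=.
case/and5P: T_rst => /injectiveP T_inj _ _ _ _ /val_inj r_ab /val_inj c_ab.
by rewrite (T_inj a b) // [T a]surjective_pairing r_ab c_ab -surjective_pairing.
Qed.

Lemma rst_row_lt k l : (0 < k <= N)%N -> (0 < l <= N)%N ->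
  rowT T k = rowT T l -> (colT T k < colT T l)%N -> (l < k)%N.
Proof.
case/entry_ord=> a ->; case/entry_ord=> b ->; rewrite /rowT /colT !cellT_ord /=.
case/and5P: T_rst => _ _ _ /forallP/(_ a)/forallP/(_ b) /implyP row _ ab1 ab2.
by apply: row; rewrite ab2 andbT; apply/eqP/val_inj.
Qed.

Lemma rst_col_lt k l : (0 < k <= N)%N -> (0 < l <= N)%N ->
  colT T k = colT T l -> (rowT T k < rowT T l)%N -> (l < k)%N.
Proof.
case/entry_ord=> a ->; case/entry_ord=> b ->; rewrite /rowT /colT !cellT_ord /=.
case/and5P: T_rst => _ _ _ _ /forallP/(_ a)/forallP/(_ b) /implyP col ab1 ab2.
by apply: col; rewrite ab2 andbT; apply/eqP/val_inj.
Qed.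

Lemma rst_same_row i : (0 < i < N)%N ->
  rowT T i = rowT T i.+1 -> colT T i = (colT T i.+1).+1.
Proof.
move=> /andP[i_gt0 iN] r_eq; have ei : (0 < i <= N)%N by lia.
have ei1 : (0 < i.+1 <= N)%N by lia.
have c_neq : colT T i != colT T i.+1.
  by apply/eqP=> c_eq; have := rst_entry_inj ei ei1 r_eq c_eq; lia.
case: ltngtP c_neq => // c_lt _; first by have := rst_row_lt ei ei1 r_eq c_lt; lia.
case: (ltngtP (colT T i) (colT T i.+1).+1) => // gap; first lia.
have [[r_lt c_sh] [rN cN]] := (rst_in_shape ei, cellT_lt T ei).
have [l [el rl cl]] : exists l, [/\ (0 < l <= N)%N, rowT T l = rowT T i
    & colT T l = (colT T i.+1).+1].
  by apply: rst_entry_at => //; [lia | rewrite /in_shape r_lt /=; lia].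
have : (l < i.+1)%N by apply: (rst_row_lt ei1 el); rewrite ?rl ?r_eq ?cl.
have : (i < l)%N by apply: (rst_row_lt el ei); rewrite ?rl ?cl.
lia.
Qed.

Lemma rst_same_col i : is_partition N la -> (0 < i < N)%N ->
  colT T i = colT T i.+1 -> rowT T i = (rowT T i.+1).+1.
Proof.
move=> la_part /andP[i_gt0 iN] c_eq; have ei : (0 < i <= N)%N by lia.
have ei1 : (0 < i.+1 <= N)%N by lia.
have r_neq : rowT T i != rowT T i.+1.
  by apply/eqP=> r_eq; have := rst_entry_inj ei ei1 r_eq c_eq; lia.
case: ltngtP r_neq => // r_lt _; first by have := rst_col_lt ei ei1 c_eq r_lt; lia.
case: (ltngtP (rowT T i) (rowT T i.+1).+1) => // gap; first lia.
have [[r_sh c_sh] [rN cN]] := (rst_in_shape ei, cellT_lt T ei).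
have [l [el rl cl]] : exists l, [/\ (0 < l <= N)%N, rowT T l = (rowT T i.+1).+1
    & colT T l = colT T i].
  apply: rst_entry_at => //; first lia.
  rewrite /in_shape /=; apply/andP; split; first lia.
  by apply: leq_trans c_sh (partition_nth_le la_part _); lia.
have : (l < i.+1)%N by apply: (rst_col_lt ei1 el); rewrite ?cl ?c_eq ?rl.
have : (i < l)%N by apply: (rst_col_lt el ei); rewrite ?rl ?cl.
lia.
Qed.

Lemma rst_content_neq i : (0 < i < N)%N ->
  rowT T i != rowT T i.+1 -> CT T i != CT T i.+1.
Proof.
move=> /andP[i_gt0 iN] r_neq; apply/eqP => ct_eq.
suff lower_row_first x y : (0 < x <= N)%N -> (0 < y <= N)%N -> (x = y.+1 \/ y = x.+1) ->
    (rowT T x < rowT T y)%N -> CT T x = CT T y -> False.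
  case: ltngtP r_neq => // r_lt _.
    by apply: (lower_row_first i i.+1) => //; lia.
  by apply: (lower_row_first i.+1 i) => //; lia.
move=> ex ey xy r_lt; rewrite /CT => ct_xy.
have [[r_sh c_sh] [rN cN]] := (rst_in_shape ey, cellT_lt T ey).
have [l [el rl cl]] : exists l, [/\ (0 < l <= N)%N, rowT T l = rowT T y
    & colT T l = colT T x].
  by apply: rst_entry_at => //; [have := cellT_lt T ex; lia | rewrite /in_shape r_sh /=; lia].
have : (y < l)%N by apply: (rst_row_lt el ey); rewrite ?rl ?cl; lia.
have : (l < x)%N by apply: (rst_col_lt ex el); rewrite ?rl ?cl.
lia.
Qed.

Lemma CT_N_eq0 : is_partition N la -> (0 < N)%N -> CT T N = 0%Z.
Proof.
move=> la_part N_gt0; have eN : (0 < N <= N)%N by rewrite N_gt0 leqnn.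
have [[r_sh c_sh] [rN cN]] := (rst_in_shape eN, cellT_lt T eN).
have c0 : colT T N = 0%N.
  apply/eqP; rewrite -leqn0 leqNgt; apply/negP=> c_gt0.
  have [l [el rl cl]] : exists l, [/\ (0 < l <= N)%N, rowT T l = rowT T N & colT T l = 0%N].
    by apply: rst_entry_at => //; rewrite /in_shape r_sh /=; lia.
  have : (N < l)%N by apply: (rst_row_lt el eN); rewrite ?cl.
  lia.
have r0 : rowT T N = 0%N.
  apply/eqP; rewrite -leqn0 leqNgt; apply/negP=> r_gt0.
  have [l [el rl cl]] : exists l, [/\ (0 < l <= N)%N, rowT T l = 0%N & colT T l = colT T N].
    apply: rst_entry_at => //; rewrite /in_shape /=; apply/andP; split; first lia.
    by apply: leq_trans c_sh (partition_nth_le la_part _); lia.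
  have : (N < l)%N by apply: (rst_col_lt el eN); rewrite ?rl.
  lia.
by rewrite /CT c0 r0.
Qed.

Lemma tswap_rst i : (0 < i < N)%N ->
  rowT T i != rowT T i.+1 -> colT T i != colT T i.+1 -> is_rst la (tswap T i i.+1).
Proof.
move=> /(tswap_tperm T) [a [b [ia ib ->]]].
rewrite /rowT /colT {1 3}ia ib !cellT_ord /= => r_ab c_ab.
have ab : (b : nat) = a.+1 by rewrite -ib ia.
case/and5P: T_rst => /injectiveP T_inj /forallP T_sh /forallP T_onto /forallP T_row /forallP T_col.
apply/and5P; split.
- by apply/injectiveP => x y; rewrite !ffunE => /T_inj/perm_inj.
- by apply/forallP => k; rewrite ffunE.
- apply/forallP => c; apply/implyP => /(implyP (T_onto c)) /codomP [k ->].
  by apply/codomP; exists (tperm a b k); rewrite ffunE tpermK.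
- apply/forallP => k; apply/forallP => l; apply/implyP; rewrite !ffunE => same_row.
  have [//|[ka lb]] := tperm_succ_lt (l := l) (k := k) ab (implyP (forallP (T_row _) _) same_row).
  move: same_row; rewrite ka lb tpermL tpermR => /andP[/eqP/(congr1 val) r_eq].
  by rewrite r_eq eqxx in r_ab.
- apply/forallP => k; apply/forallP => l; apply/implyP; rewrite !ffunE => same_col.
  have [//|[ka lb]] := tperm_succ_lt (l := l) (k := k) ab (implyP (forallP (T_col _) _) same_col).
  move: same_col; rewrite ka lb tpermL tpermR => /andP[/eqP/(congr1 val) c_eq].
  by rewrite c_eq eqxx in c_ab.
Qed.

End Tableaux.

Lemma tswapK N (T : tabT N) i j : tswap (tswap T i j) i j = T.
Proof.
rewrite /tswap; case: insub => [a|//]; case: insub => [b|//].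
by apply/ffunP => k; rewrite !ffunE tpermK.
Qed.

(** * The parameter s and the seminormal coefficients *)

Lemma s_neq0 : s != 0.
Proof. by rewrite /s tofrac_eq0 polyX_eq0. Qed.

Lemma s_expz_eq1 (m : int) : s ^ m = 1 -> m = 0.
Proof.
have s_expn_eq1 (n : nat) : s ^+ n = 1 -> n = 0%N.
  rewrite /s -tofracXn -tofrac1 => /eqP; rewrite tofrac_eq => /eqP.
  move/(congr1 (fun p : {poly {poly CC}} => size p)).
  by rewrite size_polyXn size_poly1; case.
case: m => n; first by move/s_expn_eq1->.
by rewrite NegzE -exprnN => /eqP; rewrite invr_eq1 => /eqP /s_expn_eq1.
Qed.

Lemma one_sub_s_expz_neq0 (m : int) : m != 0 -> 1 - s ^ m != 0.
Proof. by move=> m_neq0; rewrite subr_eq0 eq_sym; apply: contra m_neq0 => /eqP/s_expz_eq1->. Qed.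

Lemma s_expzS (k : int) : s ^ (k + 1) = s ^ k * s.
Proof. by rewrite expfzDr ?s_neq0 // expr1z. Qed.

Lemma s_expzN1 (k : int) : s ^ (k - 1) = s ^ k / s.
Proof. by rewrite expfzDr ?s_neq0 // exprN1. Qed.

Lemma coefA_mul (m : int) : m != 0 -> Defs.coefA m * (1 - s ^ m) = s - 1.
Proof. by move=> m_neq0; rewrite /Defs.coefA divfK // one_sub_s_expz_neq0. Qed.

Lemma hecke_coef_identity (F : fieldType) (t x : F) : t != 0 -> 1 - x != 0 ->
  (t - 1 - (t - 1) / (1 - x)) * ((t - 1) / (1 - x)) + t
    = t * (1 - x * t) * (1 - x / t) / (1 - x) ^+ 2.
Proof. by move=> t_neq0 x_neq1; field; rewrite t_neq0 x_neq1. Qed.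

Lemma coefB_eq (m : int) : m != 0 -> (s - 1 - Defs.coefA m) * Defs.coefA m + s = Defs.coefB m.
Proof.
move=> m_neq0; rewrite /Defs.coefA /Defs.coefB !expfzDr ?s_neq0 // expr1z exprN1.
exact: hecke_coef_identity s_neq0 (one_sub_s_expz_neq0 m_neq0).
Qed.

(* On a basis (e, e') with e T_i = a e + b e' and e' T_i = a' e' + b' e, evaluated at
   the coordinates (d, d') of a vector: the trace and determinant conditions give the
   quadratic relation, and together with a y + a' y' = 0 they give e T_i D T_i = t y' e
   for D = diag(y, y'). *)
Lemma hecke_quadratic_2x2 (R : comPzRingType) (t a b a' b' d d' : R) :
  a + a' = t - 1 -> b * b' = a * a' + t ->
  a * (a * d + b * d') + b * (a' * d' + b' * d) = (t - 1) * (a * d + b * d') + t * d.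
Proof.
move=> <- bb'; transitivity (a * (a * d + b * d') + a' * (b * d') + (b * b') * d); first ring.
by rewrite bb'; ring.
Qed.

Lemma hecke_intertwine_2x2 (R : comPzRingType) (t a b a' b' y y' d d' : R) :
  b * b' = a * a' + t -> a * y + a' * y' = 0 ->
  a * (y * (a * d + b * d')) + b * (y' * (a' * d' + b' * d)) = t * y' * d.
Proof.
move=> bb' ay; transitivity ((a * d + b * d') * (a * y + a' * y') + (b * b' - a * a') * y' * d).
  by ring.
by rewrite bb' ay; ring.
Qed.

(** * The seminormal representation *)

Section HeckeAction.
Variables (N : nat) (la : seq nat).
Implicit Types (u v w : Vsp N) (T U : tabT N).
(* [Vsp N] is not a K-module canonically (K is not an lmodType over itself), hence
   this hand-made linearity. *)
Definition vlinear (f : Vsp N -> Vsp N) :=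
  {morph f : u w / u + w} /\ forall c, {morph f : u / vscale c u}.

Lemma vlinear0 f : vlinear f -> f 0 = 0.
Proof. by case=> fD _; apply: (addrI (f 0)); rewrite -fD !addr0. Qed.

Lemma vlinearN f u : vlinear f -> f (- u) = - f u.
Proof.
move=> f_lin; apply: (addIr (f u)).
by rewrite -(proj1 f_lin) !addNr (vlinear0 f_lin).
Qed.

Lemma vlinear_sum f (F : tabT N -> Vsp N) : vlinear f ->
  f (\sum_T F T) = \sum_T f (F T).
Proof.
by move=> f_lin; apply: (big_morph f (proj1 f_lin) (vlinear0 f_lin)).
Qed.

Lemma bv_decomp v : v = \sum_T vscale (v T) (bv T).
Proof.
apply/ffunP => U; rewrite sum_ffunE (bigD1 U) //= big1 => [|T /negPf TU].
 by rewrite !ffunE eqxx mulr1 addr0.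
by rewrite !ffunE eq_sym TU mulr0.
Qed.

Lemma vlinearE f v : vlinear f -> f v = \sum_T vscale (v T) (f (bv T)).
Proof.
move=> f_lin; rewrite {1}(bv_decomp v) vlinear_sum //.
by apply: eq_bigr => T _; rewrite (proj2 f_lin).
Qed.

Lemma vlinear_comp f g : vlinear f -> vlinear g -> vlinear (f \o g).
Proof. by move=> [fD fZ] [gD gZ]; split=> [u w|c u] /=; rewrite ?gD ?fD ?gZ ?fZ. Qed.

Lemma actV_bv T j : actV (bv T) j = actT T j.
Proof.
rewrite /actV (bigD1 T) //= big1 => [|U /negPf UT].
 by apply/ffunP => U; rewrite !ffunE eqxx mul1r addr0.
by apply/ffunP => U'; rewrite !ffunE UT mul0r.
Qed.

Lemma actV_vlinear j : vlinear (fun v => actV v j).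
Proof.
split=> [u w|c u] /=.
  by rewrite /actV -big_split; apply: eq_bigr => T _; apply/ffunP => U; rewrite !ffunE mulrDl.
apply/ffunP => U; rewrite ffunE !sum_ffunE mulr_sumr; apply: eq_bigr => T _.
by rewrite !ffunE mulrA.
Qed.

Lemma foldl_actV_vlinear (js : seq nat) : vlinear (fun v => foldl (@actV N) v js).
Proof.
elim: js => [|j js IH] /=; first by split.
exact: (vlinear_comp (f := fun v => foldl (@actV N) v js) IH (actV_vlinear j)).
Qed.

(* On fillings that are not tableaux [actT] returns junk, so the Hecke relations only
   hold on vectors supported by tableaux. *)
Definition rst_supported v := forall U, ~~ is_rst la U -> v U = 0.

Lemma bv_supported T : is_rst la T -> rst_supported (bv T).
Proof.
move=> T_rst U; rewrite ffunE; case: eqP => [-> /negP /(_ T_rst) []|_ _].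
exact: mulr0n.
Qed.

Lemma vlinear_supported_eq f g v : vlinear f -> vlinear g ->
  (forall T, is_rst la T -> f (bv T) = g (bv T)) -> rst_supported v -> f v = g v.
Proof.
move=> f_lin g_lin fg v_sup; rewrite (vlinearE v f_lin) (vlinearE v g_lin).
apply: eq_bigr => T _; have [/fg->//|/v_sup->] := boolP (is_rst la T).
by apply/ffunP => U; rewrite !ffunE !mul0r.
Qed.

Lemma actT_pair_higher T i : is_rst la T -> (0 < i < N)%N ->
  (rowT T i.+1 < rowT T i)%N -> colT T i != colT T i.+1 ->
  exists a b a' b' : K,
    [/\ actT T i = vscale a (bv T) + vscale b (bv (tswap T i i.+1)),
        actT (tswap T i i.+1) i = vscale a' (bv (tswap T i i.+1)) + vscale b' (bv T),
        a + a' = s - 1, b * b' = a * a' + s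
      & a * s ^ CT T i.+1 + a' * s ^ CT T i = 0].
Proof.
move=> T_rst i_range r_lt c_neq; set T' := tswap T i i.+1.
set m := CT T i.+1 - CT T i; set a := Defs.coefA m; set b := Defs.coefB m.
have r_neq : rowT T i != rowT T i.+1 by rewrite neq_ltn r_lt orbT.
have m_neq0 : m != 0 by rewrite subr_eq0 eq_sym (rst_content_neq T_rst).
have [r'_l r'_r c'_l c'_r] := tswap_rowcol T i_range.
exists a, b, (s - 1 - a), (((s - 1 - a) * a + s) / b); split.
- by rewrite /actT (negPf r_neq) (negPf c_neq) r_lt.
- rewrite /actT r'_l r'_r c'_l c'_r eq_sym (negPf r_neq) eq_sym (negPf c_neq).
  by rewrite ltnNge (ltnW r_lt) /= tswapK.
- by rewrite addrC subrK.
- rewrite [a * _]mulrC coefB_eq // -/b.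
  by have [->|b_neq0] := eqVneq b 0; rewrite ?mul0r // divff // mulr1.
- have -> : CT T i.+1 = m + CT T i by rewrite /m subrK.
  rewrite expfzDr ?s_neq0 //; have := coefA_mul m_neq0; rewrite -/a => a_eq.
  transitivity (s ^ CT T i * (s - 1 - a * (1 - s ^ m))); first ring.
  by rewrite a_eq subrr mulr0.
Qed.

(* The pair case is the 2x2 block of T_i on span {T, T^(i,i+1)}; its last condition
   is the intertwining with the eigenvalues of W_(i+1) on T and T^(i,i+1). *)
Variant actT_spec T i : Prop :=
  | ActTRow of rowT T i = rowT T i.+1 & actT T i = vscale s (bv T)
  | ActTCol of colT T i = colT T i.+1 & actT T i = - bv T
  | ActTPair (a b a' b' : K) of
      actT T i = vscale a (bv T) + vscale b (bv (tswap T i i.+1))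
    & actT (tswap T i i.+1) i = vscale a' (bv (tswap T i i.+1)) + vscale b' (bv T)
    & is_rst la (tswap T i i.+1) & a + a' = s - 1 & b * b' = a * a' + s
    & a * s ^ CT T i.+1 + a' * s ^ CT T i = 0.

Lemma actTP T i : is_rst la T -> (0 < i < N)%N -> actT_spec T i.
Proof.
move=> T_rst i_range.
have [r_eq|r_neq] := eqVneq (rowT T i) (rowT T i.+1).
  by apply: ActTRow; rewrite // /actT r_eq eqxx.
have [c_eq|c_neq] := eqVneq (colT T i) (colT T i.+1).
  by apply: ActTCol; rewrite // /actT (negPf r_neq) c_eq eqxx.
have [r_lt|r_gt] := ltnP (rowT T i) (rowT T i.+1); last first.
  have {}r_gt : (rowT T i.+1 < rowT T i)%N by rewrite ltn_neqAle r_gt eq_sym r_neq.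
  have [a [b [a' [b' [act act' aa' bb' vanish]]]]] := actT_pair_higher T_rst i_range r_gt c_neq.
  exact: ActTPair act act' (tswap_rst T_rst i_range r_neq c_neq) aa' bb' vanish.
have [r'_l r'_r c'_l c'_r] := tswap_rowcol T i_range.
have T'_rst := tswap_rst T_rst i_range r_neq c_neq.
have r'_gt : (rowT (tswap T i i.+1) i.+1 < rowT (tswap T i i.+1) i)%N by rewrite r'_l r'_r.
have c'_neq : colT (tswap T i i.+1) i != colT (tswap T i i.+1) i.+1 by rewrite c'_l c'_r eq_sym.
have [a [b [a' [b' []]]]] := actT_pair_higher T'_rst i_range r'_gt c'_neq.
rewrite tswapK /CT r'_l r'_r c'_l c'_r -!/(CT _ _) => act' act aa' bb' vanish.
apply: ActTPair act act' T'_rst _ _ _; first by rewrite addrC.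
  by rewrite mulrC [a' * _]mulrC.
by rewrite addrC.
Qed.

Lemma supportedD u w : rst_supported u -> rst_supported w -> rst_supported (u + w).
Proof. by move=> u_sup w_sup U U_nrst; rewrite ffunE u_sup // w_sup // addr0. Qed.

Lemma supportedZ c u : rst_supported u -> rst_supported (vscale c u).
Proof. by move=> u_sup U U_nrst; rewrite ffunE u_sup // mulr0. Qed.

Lemma supportedN u : rst_supported u -> rst_supported (- u).
Proof. by move=> u_sup U U_nrst; rewrite ffunE u_sup // oppr0. Qed.

Lemma actT_supported T i : is_rst la T -> (0 < i < N)%N -> rst_supported (actT T i).
Proof.
move=> T_rst i_range; have T_sup := bv_supported T_rst.
case: (actTP T_rst i_range) => [_ ->|_ ->|a b a' b' -> _ T'_rst _ _ _].
- exact: supportedZ.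
- exact: supportedN.
by apply: supportedD; apply: supportedZ; last exact: bv_supported.
Qed.

Lemma actV_supported v i : (0 < i < N)%N -> rst_supported v -> rst_supported (actV v i).
Proof.
move=> i_range v_sup U U_nrst; rewrite /actV sum_ffunE big1 // => T _; rewrite ffunE.
have [T_rst|/v_sup->] := boolP (is_rst la T); last by rewrite mul0r.
by rewrite (actT_supported T_rst i_range U_nrst) mulr0.
Qed.

Lemma actT_quadratic T i : is_rst la T -> (0 < i < N)%N ->
  actV (actT T i) i = vscale (s - 1) (actT T i) + vscale s (bv T).
Proof.
move=> T_rst i_range; have [actD actZ] := actV_vlinear i.
case: (actTP T_rst i_range) => [_ act|_ act|a b a' b' act act' _ aa' bb' _]; rewrite act.
- rewrite actZ actV_bv act; move: (bv T) => u.
  by apply/ffunP => U; rewrite !ffunE; ring.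
- rewrite (vlinearN _ (actV_vlinear i)) actV_bv act.
  by move: (bv T) => u; apply/ffunP => U; rewrite !ffunE; ring.
rewrite actD !actZ !actV_bv act act'; apply/ffunP => U; rewrite !ffunE.
exact: hecke_quadratic_2x2.
Qed.

Lemma actV_quadratic v i : (0 < i < N)%N -> rst_supported v ->
  actV (actV v i) i = vscale (s - 1) (actV v i) + vscale s v.
Proof.
move=> i_range; apply: (vlinear_supported_eq (f := fun v => actV (actV v i) i)
  (g := fun v => vscale (s - 1) (actV v i) + vscale s v)) => [||T T_rst].
- exact: vlinear_comp (actV_vlinear i) (actV_vlinear i).
- have [actD actZ] := actV_vlinear i.
  by split=> [u w|c u]; rewrite ?actD ?actZ; apply/ffunP => U; rewrite !ffunE; ring.
by rewrite /= actV_bv actT_quadratic.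
Qed.

Definition actVinv v i := vscale s^-1 (actV v i + vscale (1 - s) v).

Lemma actVinv_supported v i : (0 < i < N)%N -> rst_supported v -> rst_supported (actVinv v i).
Proof.
move=> i_range v_sup; apply/supportedZ/supportedD; first exact: actV_supported.
exact: supportedZ.
Qed.

Lemma actVinvK v i : (0 < i < N)%N -> rst_supported v -> actV (actVinv v i) i = v.
Proof.
move=> i_range v_sup; have [actD actZ] := actV_vlinear i.
rewrite actZ actD actZ actV_quadratic //; apply/ffunP => U; rewrite !ffunE.
transitivity (s^-1 * s * v U); first ring.
by rewrite mulVf ?s_neq0 // mul1r.
Qed.

Definition actW i v :=
  foldl (@actV N) (foldl (@actV N) v (iota i (N - i))) (rev (iota i (N - i))).

Lemma actW_rec i v : (i < N)%N -> actW i v = actV (actW i.+1 (actV v i)) i.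
Proof.
move=> iN; rewrite /actW (_ : (N - i = (N - i.+1).+1)%N); last lia.
by rewrite /= rev_cons foldl_rcons.
Qed.

Lemma actW_vlinear i : vlinear (actW i).
Proof.
exact: (vlinear_comp (f := fun v => foldl (@actV N) v (rev (iota i (N - i))))
  (foldl_actV_vlinear _) (foldl_actV_vlinear _)).
Qed.

Lemma actW_bv T i : is_partition N la -> is_rst la T -> (0 < i <= N)%N ->
  actW i (bv T) = vscale (s ^ ((N - i)%:Z + CT T i)) (bv T).
Proof.
move=> la_part; have [n] := ubnP (N - i).
elim: n => // n IH in i T *; rewrite ltnS => Ni_le T_rst /andP[i_gt0 iN].
have [i_eqN|i_neqN] := eqVneq i N.
  rewrite /actW i_eqN subnn /= (CT_N_eq0 T_rst) // ?addr0 ?expr0z; last lia.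
  by move: (bv T) => u; apply/ffunP => U; rewrite !ffunE mul1r.
have i_range : (0 < i < N)%N by rewrite i_gt0 ltn_neqAle i_neqN.
have W_bv U : is_rst la U -> actW i.+1 (bv U) = vscale (s ^ ((N - i.+1)%:Z + CT U i.+1)) (bv U).
  by move=> U_rst; apply: IH => //; lia.
have exp_succ (c : int) : s ^ ((N - i)%:Z + c) = s * s ^ ((N - i.+1)%:Z + c).
  rewrite (_ : (N - i = (N - i.+1).+1)%N); last lia.
  by rewrite intS -addrA (expfzDr 1) ?s_neq0 // expr1z.
have [WD WZ] := actW_vlinear i.+1; have [actD actZ] := actV_vlinear i.
set e := (N - i.+1)%:Z; rewrite actW_rec ?exp_succ; last lia.
case: (actTP T_rst i_range) => [r_eq act|c_eq act|a b a' b' act act' T'_rst _ bb' vanish].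
- rewrite actV_bv act WZ W_bv // actZ actZ actV_bv act.
  have -> : CT T i = CT T i.+1 + 1 by rewrite /CT r_eq (rst_same_row T_rst) // intS; lia.
  rewrite (addrA e (CT T i.+1) 1) s_expzS; move: (bv T) (s ^ (e + CT T i.+1)) => u y.
  by apply/ffunP => U; rewrite !ffunE; ring.
- rewrite actV_bv act (vlinearN _ (actW_vlinear _)) W_bv //.
  rewrite (vlinearN _ (actV_vlinear _)) actZ actV_bv act.
  have -> : CT T i = CT T i.+1 - 1 by rewrite /CT c_eq (rst_same_col T_rst) // intS; lia.
  rewrite (addrA e (CT T i.+1) (-1)) s_expzN1 mulrC divfK ?s_neq0 //.
  by apply/ffunP => U; rewrite !ffunE mulrN opprK.
have CT'_r : CT (tswap T i i.+1) i.+1 = CT T i.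
  by have [_ r'_r _ c'_r] := tswap_rowcol T i_range; rewrite /CT r'_r c'_r.
rewrite actV_bv act WD !WZ !W_bv // actD !actZ !actV_bv act act' CT'_r.
apply/ffunP => U; rewrite !ffunE; apply: hecke_intertwine_2x2 => //.
move: (CT T i.+1) (CT T i) vanish => c1 c0 vanish; rewrite !expfzDr ?s_neq0 //.
transitivity (s ^ e * (a * s ^ c1 + a' * s ^ c0)); first ring.
by rewrite vanish mulr0.
Qed.

Lemma foldl_actVinv_supported v (js : seq nat) : all (fun j => 0 < j < N)%N js ->
  rst_supported v -> rst_supported (foldl actVinv v js).
Proof.
elim: js v => [|j js IH] v //= /andP[j_range js_range] v_sup.
exact/IH/actVinv_supported.
Qed.

Lemma foldl_actV_actVinv (js rs : seq nat) v : all (fun j => 0 < j < N)%N js ->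
  rst_supported v ->
  foldl (@actV N) (foldl actVinv v (rev js)) (js ++ rs) = foldl (@actV N) v rs.
Proof.
elim: js v => [|j js IH] v //= /andP[j_range js_range] v_sup.
rewrite rev_cons foldl_rcons actVinvK //; first exact: IH.
by apply: foldl_actVinv_supported; rewrite ?all_rev.
Qed.

End HeckeAction.

(** * Constants in the polynomial module *)

Section PolynomialModule.
Variable N : nat.
Implicit Types (u v : Vsp N) (T : tabT N).

Lemma tens0 u : tens 0 u = 0.
Proof. by apply/ffunP => T; rewrite !ffunE scaler0. Qed.

Lemma tens1D u v : tens 1 (u + v) = tens 1 u + tens 1 v.
Proof. by apply/ffunP => T; rewrite !ffunE scalerDl. Qed.

Lemma tens1_vscale c v : tens 1 (vscale c v) = c *: tens 1 v.
Proof. by apply/ffunP => T; rewrite !ffunE scalerA. Qed.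

Lemma tensZ1 c v : tens (c *: 1) v = tens 1 (vscale c v).
Proof. by apply/ffunP => T; rewrite !ffunE scalerA mulrC. Qed.

Lemma tens1_sum (F : tabT N -> Vsp N) : tens 1 (\sum_T F T) = \sum_T tens 1 (F T).
Proof.
apply/ffunP => U; rewrite ffunE !sum_ffunE scaler_suml.
by apply: eq_bigr => T _; rewrite ffunE.
Qed.

Lemma mkX_sub_neq0 k l : (k < N)%N -> (l < N)%N -> k != l -> mkX N k - mkX N l != 0.
Proof.
move=> kN lN kl; rewrite /mkX (insubT (fun x => x < N)%N kN) (insubT (fun x => x < N)%N lN) /=.
rewrite subr_eq0; apply/eqP => /(congr1 (mcoeff U_(Ordinal kN))).
rewrite !mcoeffXU eqxx (_ : (Ordinal lN == Ordinal kN) = false).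
  by move/eqP; rewrite oner_eq0.
by apply/negbTE; rewrite -val_eqE /= eq_sym.
Qed.

Lemma divq0 (b : {mpoly K[N]}) : b != 0 -> Defs.divq 0 b = 0.
Proof.
move=> b_neq0; rewrite /Defs.divq.
have := epsilon_spec (inhabits 0) (fun r : {mpoly K[N]} => r * b = 0) (ex_intro _ 0 (@mul0r _ b)).
by move/eqP; rewrite mulf_eq0 (negbTE b_neq0) orbF => /eqP.
Qed.

Lemma psw_const j c : psw j (c *: 1 : {mpoly K[N]}) = c *: 1.
Proof. by rewrite /psw comp_mpolyZ comp_mpoly1. Qed.

Lemma tens_divdiff_const j c u : (0 < j < N)%N ->
  tens ((1 - s) *: Defs.divq (mkX N j * (c *: 1 - psw j (c *: 1))) (mkX N j.-1 - mkX N j)) u = 0.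
Proof.
move=> j_range; rewrite psw_const (subrr (c *: 1 : {mpoly K[N]})) mulr0 divq0.
  by apply/ffunP => T; rewrite !ffunE !scaler0.
by apply: mkX_sub_neq0; lia.
Qed.

Lemma opT_tens1 j v : (0 < j < N)%N -> opT j (tens 1 v) = tens 1 (actV v j).
Proof.
move=> j_range; rewrite /opT /actV tens1_sum; apply: eq_bigr => T _.
by rewrite ffunE tens_divdiff_const // add0r psw_const tensZ1.
Qed.

Lemma opTinv_tens1 j v : (0 < j < N)%N -> opTinv j (tens 1 v) = tens 1 (actVinv v j).
Proof.
by move=> j_range; rewrite /opTinv opT_tens1 // /actVinv tens1_vscale tens1D tens1_vscale.
Qed.

Lemma opw_tens1 v : opw (tens 1 v) = tens 1 (foldl (@actV N) v (iota 1 N.-1)).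
Proof.
have := vlinearE v (foldl_actV_vlinear N (iota 1 N.-1)); rewrite /= => ->.
rewrite /opw tens1_sum; apply: eq_bigr => T _.
by rewrite ffunE /pshift comp_mpolyZ comp_mpoly1 tensZ1.
Qed.

Lemma foldl_opT_tens1 (js : seq nat) v : all (fun j => 0 < j < N)%N js ->
  foldl (fun G j => opT j G) (tens 1 v) js = tens 1 (foldl (@actV N) v js).
Proof.
elim: js v => [|j js IH] v //= /andP[j_range js_range].
by rewrite opT_tens1 // IH.
Qed.

Lemma foldl_opTinv_tens1 (js : seq nat) v : all (fun j => 0 < j < N)%N js ->
  foldl (fun G j => opTinv j G) (tens 1 v) js = tens 1 (foldl (@actVinv N) v js).
Proof.
elim: js v => [|j js IH] v //= /andP[j_range js_range].
by rewrite opTinv_tens1 // IH.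
Qed.

End PolynomialModule.

Lemma iota_in_range N m k : (0 < m)%N -> (m + k <= N)%N ->
  all (fun j => 0 < j < N)%N (iota m k).
Proof. by move=> m_gt0 mkN; apply/allP => j; rewrite mem_iota => /andP[? ?]; lia. Qed.

Theorem proposition3p2 (N : nat) (la : seq nat) (T : tabT N) (i : nat) :
  (2 <= N)%N -> is_partition N la -> is_rst la T -> (1 <= i <= N)%N ->
  Xi i (tens 1 (bv T)) = s ^ (CT T i) *: tens 1 (bv T).
Proof.
move=> _ la_part T_rst i_range; have /andP[i_gt0 iN] := i_range.
have lo_range : all (fun j => 0 < j < N)%N (iota 1 i.-1) by apply: iota_in_range; lia.
have hi_range : all (fun j => 0 < j < N)%N (iota i (N - i)) by apply: iota_in_range; lia.
have split_iota : iota 1 N.-1 = iota 1 i.-1 ++ iota i (N - i).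
  have -> : N.-1 = (i.-1 + (N - i))%N by lia.
  by rewrite iotaD; congr (_ ++ iota _ _); lia.
have lo_rev : all (fun j => 0 < j < N)%N (rev (iota 1 i.-1)) by rewrite all_rev.
have hi_rev : all (fun j => 0 < j < N)%N (rev (iota i (N - i))) by rewrite all_rev.
rewrite /Xi (foldl_opTinv_tens1 _ lo_rev) opw_tens1 (foldl_opT_tens1 _ hi_rev) split_iota.
rewrite (foldl_actV_actVinv _ lo_range (bv_supported T_rst)) -/(actW i (bv T)).
rewrite (actW_bv la_part T_rst i_range) tens1_vscale scalerA -(expfzDr _ _ s_neq0).
by congr (s ^ _ *: _); lia.
Qed.
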